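(* The space $\tilde D$ with the metric $d_{\tilde D}$ is separable and complete.
   Context: $D=D([0,1],\mathbb R^d)$ is the space of càdlàg functions on $[0,1]$. $\tilde D=D/\!\sim$, where $x\sim y$ iff $x\circ\lambda=y$ for some continuous strictly increasing bijection $\lambda:[0,1]\to[0,1]$, and $d_{\tilde D}([x],[y])=\inf_\lambda\|x\circ\lambda-y\|_\infty$, the infimum over all such $\lambda$. *)

From HB Require Import structures.
From mathcomp Require Import all_boot all_order all_algebra.
From mathcomp Require Import all_classical all_reals all_analysis.
Set Implicit Arguments. Unset Strict Implicit. Unset Printing Implicit Defensive.
Import Order.TTheory GRing.Theory Num.Theory.
Import numFieldNormedType.Exports.
Local Open Scope classical_set_scope.
Local Open Scope ring_scope.

Section Skorokhod.
Variables (R : realType) (d : nat).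

(* elements of D are represented by functions R -> R^d; only their values on
   [0,1] matter (functions agreeing on [0,1] lie in the same class below). *)
Definition fn := R -> 'rV[R]_d.

Definition I01 : set R := [set` `[0, 1]].

Definition cadlag (x : fn) : Prop :=
  (forall t, 0 <= t -> t < 1 -> x s @[s --> t^'+] --> x t) /\
  (forall t, 0 < t -> t <= 1 -> cvg (x s @[s --> t^'-])).

Definition time_change (lam : R -> R) : Prop :=
  {within I01, continuous lam} /\
  (forall s t, I01 s -> I01 t -> s < t -> lam s < lam t) /\
  lam @` I01 = I01.

Definition tequiv (x y : fn) : Prop :=
  exists2 lam, time_change lam & forall t, I01 t -> x (lam t) = y t.

Definition supnorm (f : fn) : R := sup [set `|f t| | t in I01].

(* the quotient D/~ : a set of càdlàg functions which is the ~-class of some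
   càdlàg function *)
Record Dtilde := MkDtilde {
  cls : set fn ;
  clsP : exists x, cadlag x /\ cls = [set y | cadlag y /\ tequiv x y] }.

(* d([x],[y]) = inf_lam ||x o lam - y||_oo, the infimum taken over all time
   changes (and, equivalently, over all representatives of the two classes) *)
Definition dDt (A B : Dtilde) : R :=
  inf [set r | exists x y lam, [/\ cls A x, cls B y, time_change lam &
                   r = supnorm (fun t => x (lam t) - y t)]].
Arguments dDt : clear implicits.

Definition dDt_separable : Prop :=
  exists S : set Dtilde, countable S /\
    forall (A : Dtilde) (e : R), 0 < e -> exists2 B, S B & dDt A B < e.

Definition dDt_cauchy (u : nat -> Dtilde) : Prop :=
  forall e : R, 0 < e -> exists N : nat, forall m n : nat,
    (N <= m)%N -> (N <= n)%N -> dDt (u m) (u n) < e.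

Definition dDt_complete : Prop :=
  forall u : nat -> Dtilde, dDt_cauchy u ->
    exists A : Dtilde, dDt (u n) A @[n --> \oo] --> 0.

End Skorokhod.

From mathcomp Require Import all_boot all_order all_algebra.
From mathcomp Require Import all_classical all_reals all_analysis.
From mathcomp Require Import ring lra.
Set Implicit Arguments. Unset Strict Implicit. Unset Printing Implicit Defensive.
Import Order.TTheory GRing.Theory Num.Theory.
Import numFieldNormedType.Exports.
Local Open Scope classical_set_scope.
Local Open Scope ring_scope.

(* Completeness: pass to a subsequence of a Cauchy sequence of classes whose
   consecutive distances are below 2^-(k+1).  As the distance is an infimum
   over all representatives and time changes, and classes are closed under
   time changes, one can choose representatives Y_k one after the other with
   sup |Y_k - Y_(k+1)| <= 2^-(k+1).  They converge uniformly on [0, 1], the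
   uniform limit y is again cadlag, and the classes converge to [y].

   Separability: for every e > 0 a cadlag x admits a partition
   0 = t_0 < ... < t_k = 1 with |x s - x t_i| <= e on each [t_i, t_(i+1))
   (take the supremum of the points up to which such a partition exists and
   use the left limit, then the right continuity, there).  The piecewise
   linear time change sending i/k to t_i turns x, up to e, into a step function
   jumping only at the points i/k, and rounding its values to a lattice
   (M+1)^-1 Z^d leaves countably many classes. *)

Section TimeChange.
Variable R : realType.
Implicit Types (l m : R -> R) (s t : R).

Lemma I01E t : I01 t <-> 0 <= t <= 1.
Proof. by rewrite /I01 /= in_itv. Qed.

Lemma I01_0 : I01 (0 : R). Proof. by apply/I01E; rewrite lexx ler01. Qed.
Lemma I01_1 : I01 (1 : R). Proof. by apply/I01E; rewrite lexx ler01. Qed.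

Lemma continuous_within_comp (A B : set R) l m :
  {within A, continuous m} -> {within B, continuous l} ->
  (forall t, A t -> B (m t)) -> {within A, continuous (l \o m)}.
Proof.
move=> cm cl mAB; apply/subspace_continuousP => t At.
have mt := (@subspace_continuousP _ A _ m).1 cm t At.
have lmt := (@subspace_continuousP _ B _ l).1 cl (m t) (mAB _ At).
apply: cvg_comp lmt => W /= HW.
have := mt _ HW; rewrite /within /= !nbhs_simpl /=.
by apply: filterS => s + As; apply => //; apply: mAB.
Qed.

Lemma time_change_I01 l t : time_change l -> I01 t -> I01 (l t).
Proof. by move=> [_ [_ lI]] It; rewrite -lI; exists t. Qed.

Lemma time_change_lt l s t :
  time_change l -> I01 s -> I01 t -> s < t -> l s < l t.
Proof. by move=> [_ [lt_l _]]; apply: lt_l. Qed.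

Lemma time_change_le l s t :
  time_change l -> I01 s -> I01 t -> s <= t -> l s <= l t.
Proof.
move=> tl Is It; rewrite le_eqVlt => /predU1P[->//|st].
exact/ltW/(time_change_lt tl).
Qed.

Lemma time_change_inj l s t :
  time_change l -> I01 s -> I01 t -> l s = l t -> s = t.
Proof.
move=> tl Is It e; case: (ltgtP s t) => // st.
- by have := time_change_lt tl Is It st; rewrite e ltxx.
- by have := time_change_lt tl It Is st; rewrite e ltxx.
Qed.

Lemma time_change0 l : time_change l -> l 0 = 0.
Proof.
move=> tl; have [_ [_ lI]] := tl; have := I01_0; rewrite -lI => -[s Is ls0].
have /I01E/andP[s0 _] := Is.
have := time_change_le tl I01_0 Is s0; rewrite ls0 => l00.
by apply/eqP; rewrite eq_le l00; have /I01E/andP[] := time_change_I01 tl I01_0.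
Qed.

Lemma time_change1 l : time_change l -> l 1 = 1.
Proof.
move=> tl; have [_ [_ lI]] := tl; have := I01_1; rewrite -lI => -[s Is ls1].
have /I01E/andP[_ s1] := Is.
have := time_change_le tl Is I01_1 s1; rewrite ls1 => l11.
by apply/eqP; rewrite eq_le l11 andbT; have /I01E/andP[] := time_change_I01 tl I01_1.
Qed.

Lemma time_change_gt0 l t : time_change l -> I01 t -> 0 < t -> 0 < l t.
Proof.
by move=> tl It t0; rewrite -(time_change0 tl); apply: time_change_lt tl I01_0 It t0.
Qed.

Lemma time_change_lt1 l t : time_change l -> I01 t -> t < 1 -> l t < 1.
Proof.
by move=> tl It t1; rewrite -(time_change1 tl); apply: time_change_lt tl It I01_1 t1.
Qed.

Lemma time_change_id : time_change (@id R).
Proof.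
split; first by apply: continuous_subspaceT => t; apply: cvg_id.
by split => //; rewrite image_id.
Qed.

Lemma time_change_comp l m :
  time_change l -> time_change m -> time_change (l \o m).
Proof.
move=> tl tm; split; last split.
- exact: continuous_within_comp (proj1 tm) (proj1 tl) (fun t => time_change_I01 tm).
- move=> s t Is It st; apply: (time_change_lt tl); try exact: time_change_I01.
  exact: (time_change_lt tm).
- by rewrite -image_comp (proj2 (proj2 tm)) (proj2 (proj2 tl)).
Qed.

Lemma time_change_inv l : time_change l -> exists m, [/\ time_change m,
  forall t, I01 t -> l (m t) = t & forall t, I01 t -> m (l t) = t].
Proof.
move=> tl.
have /choice[m Hm] t : exists s, I01 t -> I01 s /\ l s = t.
  have [It|nIt] := pselect (I01 t); last by exists t.
  have [s Is ls] : (l @` @I01 R) t by rewrite (proj2 (proj2 tl)).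
  by exists s.
have lm t : I01 t -> l (m t) = t by move=> /Hm[].
have Im t : I01 t -> I01 (m t) by move=> /Hm[].
have ml t : I01 t -> m (l t) = t.
  move=> It; have Ilt := time_change_I01 tl It.
  by apply: (time_change_inj tl (Im _ Ilt) It); rewrite lm.
exists m; split => //; split; last split.
- have := @segment_can_le_continuous R 0 1 l m ler01 (proj1 tl).
  by rewrite (time_change0 tl) (time_change1 tl); apply => t /I01E/ml.
- move=> s t Is It st; rewrite ltNge; apply/negP => ts.
  by have := time_change_le tl (Im _ It) (Im _ Is) ts; rewrite !lm // leNgt st.
- apply/seteqP; split => [_ [t It <-]|t It]; first exact: Im.
  by exists (l t); [exact: time_change_I01 | exact: ml].
Qed.

Lemma time_change_at_right l t : time_change l -> 0 <= t -> t < 1 ->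
  l s @[s --> t^'+] --> (l t)^'+.
Proof.
move=> tl t0 t1.
have lt : l s @[s --> t^'+] --> l t.
  have [lc lc0 _] := (continuous_within_itvP l (@ltr01 R)).1 (proj1 tl).
  move: t0; rewrite le_eqVlt => /predU1P[<-//|t0].
  by apply: cvg_at_right_filter; apply: lc; rewrite in_itv /= t0 t1.
move=> W /lt /=; rewrite !near_simpl; apply: filter_app; near=> s => /=; apply.
apply: time_change_lt tl _ _ _; first by apply/I01E; rewrite t0 ltW.
  apply/I01E/andP; split; last by near: s; apply: nbhs_right_le.
  by apply: le_trans t0 _; near: s; apply: nbhs_right_ge.
by near: s; apply: nbhs_right_gt.
Unshelve. all: by end_near. Qed.

Lemma time_change_at_left l t : time_change l -> 0 < t -> t <= 1 ->
  l s @[s --> t^'-] --> (l t)^'-.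
Proof.
move=> tl t0 t1.
have lt : l s @[s --> t^'-] --> l t.
  have [lc _ lc1] := (continuous_within_itvP l (@ltr01 R)).1 (proj1 tl).
  move: t1; rewrite le_eqVlt => /predU1P[->//|t1].
  by apply: cvg_at_left_filter; apply: lc; rewrite in_itv /= t0 t1.
move=> W /lt /=; rewrite !near_simpl; apply: filter_app; near=> s => /=; apply.
apply: time_change_lt tl _ _ _; last 2 first.
- by apply/I01E; rewrite t1 ltW.
- by near: s; apply: nbhs_left_lt.
apply/I01E/andP; split; first by near: s; apply: nbhs_left_ge.
by apply: le_trans t1; near: s; apply: nbhs_left_le.
Unshelve. all: by end_near. Qed.

Lemma cadlag_comp d (x : fn R d) l : cadlag x -> time_change l -> cadlag (x \o l).
Proof.
move=> [xr xl] tl; split => t t0 t1.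
- have It : I01 t by apply/I01E; rewrite t0 ltW.
  have /I01E/andP[lt0 _] := time_change_I01 tl It.
  by apply: cvg_comp (time_change_at_right tl t0 t1) (xr _ lt0 _); exact: time_change_lt1.
- apply/cvg_ex; exists (lim (x s @[s --> (l t)^'-])).
  have It : I01 t by apply/I01E; rewrite t1 ltW.
  have /I01E/andP[_ lt1] := time_change_I01 tl It.
  by apply: cvg_comp (time_change_at_left tl t0 t1) (xl _ _ lt1); exact: time_change_gt0.
Qed.

End TimeChange.

Section Partition.
Variable R : realType.

Lemma near_at_left_itv (T : R) (Q : R -> Prop) : (\forall s \near T^'-, Q s) ->
  exists2 e, 0 < e & forall s, T - e < s -> s < T -> Q s.
Proof.
rewrite near_withinE => /nbhs_ballP[e /= e0 eQ]; exists e => // s Ts sT.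
apply: eQ => //; rewrite /ball /= ger0_norm ?subr_ge0 ?ltW //.
by rewrite ltrBlDr addrC -ltrBlDr.
Qed.

Lemma near_at_right_itv (T : R) (Q : R -> Prop) : (\forall s \near T^'+, Q s) ->
  exists2 e, 0 < e & forall s, T < s -> s < T + e -> Q s.
Proof.
rewrite near_withinE => /nbhs_ballP[e /= e0 eQ]; exists e => // s Ts sT.
apply: eQ => //; rewrite /ball /= distrC ger0_norm ?subr_ge0 ?ltW //.
by rewrite ltrBlDl.
Qed.

Lemma partition_cell (tt : nat -> R) k t : tt 0%N <= t -> t < tt k ->
  exists2 i, (i < k)%N & tt i <= t < tt i.+1.
Proof.
elim: k => [t0 tk|k IH t0 tk]; first by have := le_lt_trans t0 tk; rewrite ltxx.
have [tk'|kt] := ltP t (tt k); last by exists k; rewrite ?kt.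
by have [i ik it] := IH t0 tk'; exists i => //; apply: ltnW.
Qed.

Lemma partition_cell_rc (tt : nat -> R) k t : tt 0%N < t -> t <= tt k ->
  exists2 i, (i < k)%N & tt i < t <= tt i.+1.
Proof.
elim: k => [t0 tk|k IH t0 tk]; first by have := lt_le_trans t0 tk; rewrite ltxx.
have [tk'|kt] := leP t (tt k); last by exists k; rewrite ?kt.
by have [i ik it] := IH t0 tk'; exists i => //; apply: ltnW.
Qed.

Variable d : nat.
Implicit Types (x : fn R d) (e : R).

Definition osc_partition x e (tau : R) := exists (k : nat) (tt : nat -> R),
  [/\ tt 0%N = 0, tt k = tau, forall i, (i < k)%N -> tt i < tt i.+1 &
      forall i s, (i < k)%N -> tt i <= s -> s < tt i.+1 -> `|x s - x (tt i)| <= e].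

Lemma osc_partition0 x e : osc_partition x e 0.
Proof. by exists 0%N, (fun=> 0). Qed.

Lemma osc_partition_snoc x e tau tau' : osc_partition x e tau -> tau < tau' ->
  (forall s, tau <= s -> s < tau' -> `|x s - x tau| <= e) -> osc_partition x e tau'.
Proof.
move=> [k [tt [t0 tk tinc tosc]]] tau_tau' osc'.
exists k.+1, (fun i => if (i <= k)%N then tt i else tau'); split => //=.
- by rewrite ltnn.
- move=> i; rewrite ltnS => ik; rewrite ik; case: (ltnP i k) => [|ki]; first exact: tinc.
  have -> : i = k by apply/eqP; rewrite eqn_leq ik ki.
  by rewrite tk.
- move=> i s; rewrite ltnS => ik; rewrite ik; case: (ltnP i k) => [|ki]; first exact: tosc.
  have -> : i = k by apply/eqP; rewrite eqn_leq ik ki.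
  by rewrite tk; apply: osc'.
Qed.

Lemma osc_partition_at_left x e T : 0 < e -> cvg (x s @[s --> T^'-]) ->
  (forall r, r < T -> exists2 tau, r < tau <= T & osc_partition x e tau) ->
  osc_partition x e T.
Proof.
move=> e0 /cvg_ex[L /cvgrPdist_lt xL] approx; have e20 : 0 < e / 2 by rewrite divr_gt0.
have [del del0 nearL] := near_at_left_itv (xL _ e20).
have [|tau /andP[Ttau tauT] Ptau] := approx (T - del); first by rewrite ltrBlDr ltrDl.
move: tauT; rewrite le_eqVlt => /predU1P[<-//|tauT].
apply: osc_partition_snoc Ptau (tauT) _ => s taus sT.
apply: le_trans (ler_distD L _ _) _; rewrite [leRHS](splitr e) distrC.
by apply: lerD; apply/ltW/nearL => //; exact: lt_le_trans Ttau taus.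
Qed.

Lemma osc_partition_at_right x e T : 0 < e -> T < 1 ->
  x s @[s --> T^'+] --> x T -> osc_partition x e T ->
  exists2 tau, T < tau <= 1 & osc_partition x e tau.
Proof.
move=> e0 T1 /cvgrPdist_lt xT PT.
have [del del0 nearT] := near_at_right_itv (xT e e0).
pose tau := Num.min (T + del / 2) 1.
have Ttau : T < tau by rewrite lt_min T1 ltrDl divr_gt0.
exists tau; first by rewrite Ttau ge_min lexx orbT.
apply: osc_partition_snoc PT Ttau _ => s; rewrite le_eqVlt => /predU1P[<-|Ts] stau.
  by rewrite subrr normr0 ltW.
have tau_le : tau <= T + del / 2 by rewrite ge_min lexx.
by rewrite distrC ltW // nearT //; lra.
Qed.

Lemma cadlag_osc_partition x e : cadlag x -> 0 < e -> osc_partition x e 1.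
Proof.
move=> [xr xl] e0.
pose S := [set tau : R | 0 <= tau <= 1 /\ osc_partition x e tau].
have S0 : S 0 by split; [rewrite lexx ler01 | exact: osc_partition0].
have S_ub : has_ubound S by exists 1 => tau [/andP[]].
have S_le_sup tau : S tau -> tau <= sup S by apply: ub_le_sup.
have T0 : 0 <= sup S by apply: S_le_sup.
have T1 : sup S <= 1 by apply: ge_sup; [exists 0 | move=> tau [/andP[]]].
have PT : osc_partition x e (sup S).
  move: T0; rewrite le_eqVlt => /predU1P[<-|T0]; first exact: osc_partition0.
  apply: osc_partition_at_left (xl _ T0 T1) _ => // r /(sup_gt (ex_intro _ 0 S0)).
  by move=> [tau Stau rtau]; exists tau; [rewrite rtau S_le_sup | case: Stau].
move: T1; rewrite le_eqVlt => /predU1P[<-//|T1].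
have [tau /andP[Ttau tau1] Ptau] := osc_partition_at_right e0 T1 (xr _ T0 T1) PT.
have : S tau by split; rewrite // tau1 andbT (le_trans T0) ?ltW.
by move=> /S_le_sup; rewrite leNgt Ttau.
Qed.

Lemma cadlag_bounded x : cadlag x -> exists M, forall t, I01 t -> `|x t| <= M.
Proof.
move=> cx; have [k [tt [t0 tk _ tosc]]] := cadlag_osc_partition cx ltr01.
pose M := \big[Num.max/0]_(i < k.+1) `|x (tt i)|.
have leM i : (i <= k)%N -> `|x (tt i)| <= M.
  rewrite -ltnS => ik.
  exact: (le_bigmax 0 (fun i : 'I_k.+1 => `|x (tt i)|) (Ordinal ik)).
exists (M + 1) => t /I01E/andP[t0' t1].
move: t1; rewrite le_eqVlt => /predU1P[->|t1].
  by have := leM k (leqnn k); rewrite tk => /le_trans; apply; rewrite lerDl.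
have [i ik /andP[it ti]] : exists2 i, (i < k)%N & tt i <= t < tt i.+1.
  by apply: partition_cell; rewrite ?t0 ?tk.
have := ler_normD (x t - x (tt i)) (x (tt i)); rewrite subrK => /le_trans; apply.
by rewrite addrC lerD ?leM ?(ltnW ik) ?tosc.
Qed.

End Partition.

Section Dtilde.
Variables (R : realType) (d : nat).
Implicit Types (x y z f : fn R d) (l : R -> R) (A B : Dtilde R d).

Lemma supnorm_le f e : (forall t, I01 t -> `|f t| <= e) -> supnorm f <= e.
Proof.
move=> fe; apply: ge_sup; first by exists `|f 0|, 0 => //; exact: I01_0.
by move=> _ [t It <-]; apply: fe.
Qed.

Lemma supnorm_ge f M t : (forall s, I01 s -> `|f s| <= M) -> I01 t -> `|f t| <= supnorm f.
Proof.
move=> fM It; apply: ub_le_sup; last by exists t.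
by exists M => _ [s Is <-]; apply: fM.
Qed.

Lemma supnorm_ge0 f : 0 <= supnorm f.
Proof.
have [f_ub|f_nub] := pselect (has_ubound [set `|f t| | t in @I01 R]).
  apply: le_trans (normr_ge0 (f 0)) (ub_le_sup f_ub _).
  by exists 0 => //; exact: I01_0.
by rewrite /supnorm sup_out // => -[_ ?].
Qed.

Lemma tequiv_refl x : tequiv x x.
Proof. by exists id => //; exact: time_change_id. Qed.

Definition Dclass x (cx : cadlag x) : Dtilde R d :=
  MkDtilde (ex_intro _ x (conj cx erefl)).

Lemma Dclass_cls x (cx : cadlag x) : cls (Dclass cx) x.
Proof. by split => //; exact: tequiv_refl. Qed.

Lemma clsE A : exists2 r, cadlag r & forall y, cls A y <-> cadlag y /\ tequiv r y.
Proof. by have [r [cr ->]] := clsP A; exists r. Qed.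

Lemma cls_cadlag A y : cls A y -> cadlag y.
Proof. by have [r _ Ar] := clsE A; move/Ar => []. Qed.

Lemma cls_ex A : exists y, cls A y.
Proof. by have [r cr Ar] := clsE A; exists r; apply/Ar; split => //; exact: tequiv_refl. Qed.

Lemma cls_time_change A y z : cls A y -> cls A z ->
  exists2 l, time_change l & forall t, I01 t -> z t = y (l t).
Proof.
have [r _ Ar] := clsE A; move=> /Ar[_ [a ta ray]] /Ar[_ [b tb rbz]].
have [a' [ta' aa' _]] := time_change_inv ta.
exists (a' \o b); first exact: time_change_comp.
move=> t It /=; rewrite -rbz // -ray ?aa' //; first exact: time_change_I01.
exact/(time_change_I01 ta')/(time_change_I01 tb).
Qed.

Lemma cls_comp A y l : cls A y -> time_change l -> cls A (y \o l).
Proof.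
have [r _ Ar] := clsE A; move=> /Ar[cy [a ta ray]] tl; apply/Ar.
split; first exact: cadlag_comp.
exists (a \o l); first exact: time_change_comp.
by move=> t It /=; rewrite ray //; apply: time_change_I01.
Qed.

Let dDt_set A B := [set r | exists x y l, [/\ cls A x, cls B y, time_change l &
  r = supnorm (fun t => x (l t) - y t)]].

Lemma dDt_set_neq0 A B : dDt_set A B !=set0.
Proof.
have [x Ax] := cls_ex A; have [y By] := cls_ex B.
rewrite /dDt_set; exists (supnorm (fun t => x t - y t)), x, y, id.
split => //; exact: time_change_id.
Qed.

Lemma dDt_ge0 A B : 0 <= dDt A B.
Proof.
apply: lb_le_inf; first exact: dDt_set_neq0.
by move=> _ [x [y [l [_ _ _ ->]]]]; exact: supnorm_ge0.
Qed.

Lemma dDt_le A B x y l e : cls A x -> cls B y -> time_change l ->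
  (forall t, I01 t -> `|x (l t) - y t| <= e) -> dDt A B <= e.
Proof.
move=> Ax By tl xye; apply: le_trans (supnorm_le xye).
apply: ge_inf; last by exists x, y, l.
by exists 0 => _ [x' [y' [l' [_ _ _ ->]]]]; exact: supnorm_ge0.
Qed.

Lemma dDt_lt A B e : dDt A B < e -> exists x y l, [/\ cls A x, cls B y,
  time_change l & forall t, I01 t -> `|x (l t) - y t| <= e].
Proof.
move=> /(inf_lt (dDt_set_neq0 A B))[_ [x [y [l [Ax By tl ->]]]] lt_e].
exists x, y, l; split => // t It; apply: le_trans (ltW lt_e).
have [Mx Mx_ub] := cadlag_bounded (cls_cadlag Ax).
have [My My_ub] := cadlag_bounded (cls_cadlag By).
apply: (@supnorm_ge _ (Mx + My)) It => s Is.
apply: le_trans (ler_normB _ _) _.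
by apply: lerD; [apply: Mx_ub; exact: time_change_I01 | exact: My_ub].
Qed.

(* Both classes are closed under time changes, so a near-optimal pair of
   representatives can be moved onto any given representative of either class. *)
Lemma dDt_lt_cls_l A B y e : dDt A B < e -> cls B y ->
  exists2 x, cls A x & forall t, I01 t -> `|x t - y t| <= e.
Proof.
move=> /dDt_lt[x [y' [l [Ax By' tl xy'e]]]] By.
have [a ta y'a] := cls_time_change By' By.
exists (x \o (l \o a)); first by apply: cls_comp => //; exact: time_change_comp.
by move=> t It; rewrite y'a //=; apply/xy'e/time_change_I01.
Qed.

Lemma dDt_lt_cls_r A B x e : dDt A B < e -> cls A x ->
  exists2 y, cls B y & forall t, I01 t -> `|x t - y t| <= e.
Proof.
move=> /dDt_lt[x' [y [l [Ax' By tl x'ye]]]] Ax.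
have [m [tm lm _]] := time_change_inv tl.
have [a ta x'a] := cls_time_change Ax' Ax.
exists (y \o (m \o a)); first by apply: cls_comp => //; exact: time_change_comp.
move=> t It; have Iat := time_change_I01 ta It.
by have := x'ye _ (time_change_I01 tm Iat); rewrite lm // -x'a.
Qed.

End Dtilde.

Section Completeness.
Variable R : realType.

Lemma cauchy_modulus_cvg m n (u : nat -> 'M[R]_(m, n)) (w : nat -> R) :
  w i @[i --> \oo] --> 0 -> (forall k i, (k <= i)%N -> `|u k - u i| <= w k) ->
  cvg (u i @[i --> \oo]) /\ forall k, `|u k - lim (u i @[i --> \oo])| <= w k.
Proof.
move=> w0 uw.
have ucvg : cvg (u i @[i --> \oo]).
  apply: cauchy_cvg; apply: cauchy_exP => e e0.
  have /cvgrPdist_lt/(_ e e0)[K _ wK] := w0.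
  exists (u K); exists K => // i /= Ki; rewrite -ball_normE /ball_ /=.
  apply: le_lt_trans (uw _ _ Ki) _; apply: le_lt_trans (wK K (leqnn K)).
  by rewrite sub0r normrN ler_norm.
split => // k; apply/ler_addgt0Pr => e e0.
have /cvgrPdist_lt/(_ e e0)[K _ uK] := ucvg.
have ukn := uw k _ (leq_maxl k K).
have unl := uK _ (leq_maxr k K); rewrite /= distrC in unl.
have := ler_distD (u (maxn k K)) (u k) (lim (u i @[i --> \oo])); lra.
Qed.

Lemma geometric_cvg0 : (2^-1 : R) ^+ k @[k --> \oo] --> 0.
Proof. by apply: cvg_expr; rewrite ger0_norm ?invr_ge0 // invf_lt1 // ltr1n. Qed.

Lemma geometric_chain_dist (V : normedModType R) (u : nat -> V) :
  (forall k, `|u k - u k.+1| <= 2^-1 ^+ k.+1) ->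
  forall k n, (k <= n)%N -> `|u k - u n| <= 2^-1 ^+ k.
Proof.
move=> uS k n kn.
have dist_add j : `|u k - u (k + j)%N| <= 2^-1 ^+ k - 2^-1 ^+ (k + j).
  elim: j => [|j IH]; first by rewrite addn0 !subrr normr0.
  have := ler_distD (u (k + j)%N) (u k) (u (k + j.+1)%N); have := uS (k + j)%N.
  by rewrite addnS exprSr; lra.
rewrite -(subnKC kn); apply: le_trans (dist_add _) _.
by rewrite lerBlDr lerDl exprn_ge0 // invr_ge0.
Qed.

Variable d : nat.
Implicit Types (y z : fn R d).

Lemma cadlag_uniform_closed y :
  (forall e, 0 < e -> exists2 z, cadlag z & forall t, I01 t -> `|z t - y t| < e) ->
  cadlag y.
Proof.
move=> approx; split => t t0 t1.
- have It : I01 t by apply/I01E; rewrite t0 ltW.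
  apply/cvgrPdist_lt => e e0; have e30 : 0 < e / 3 by rewrite divr_gt0.
  have [z [zr _] zy] := approx _ e30.
  have /cvgrPdist_lt/(_ _ e30) zt := zr t t0 t1.
  near=> s.
  have Is : I01 s.
    apply/I01E/andP; split; last by near: s; apply: nbhs_right_le.
    by apply: le_trans t0 _; near: s; apply: nbhs_right_ge.
  have zts : `|z t - z s| < e / 3 by near: s.
  have := zy t It; have := zy s Is.
  have := ler_distD (z t) (y t) (y s); have := ler_distD (z s) (z t) (y s).
  by rewrite [`|y t - z t|]distrC; lra.
- have nearI : \forall s \near t^'-, I01 s.
    near=> s; apply/I01E/andP; split; first by near: s; apply: nbhs_left_ge.
    by apply: le_trans t1; near: s; apply: nbhs_left_le.
  apply: cauchy_cvg; apply: cauchy_exP => e e0; have e20 : 0 < e / 2 by rewrite divr_gt0.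
  have [z [_ zl] zy] := approx _ e20.
  have /cvg_ex[L /cvgrPdist_lt/(_ _ e20) zL] := zl t t0 t1.
  exists L; rewrite /fmap /=; near=> s; rewrite /preimage /= -ball_normE /ball_ /=.
  have Lzs : `|L - z s| < e / 2 by near: s.
  have Is : I01 s by near: s; exact: nearI.
  have := zy s Is; have := ler_distD (z s) L (y s); lra.
Unshelve. all: by end_near. Qed.

Lemma dDt_cauchy_modulus (u : nat -> Dtilde R d) (e : nat -> R) :
  dDt_cauchy u -> (forall k, 0 < e k) ->
  exists m : nat -> nat, (forall k, (m k <= m k.+1)%N) /\
    forall k p q, (m k <= p)%N -> (m k <= q)%N -> dDt (u p) (u q) < e k.
Proof.
move=> cu e0.
have /choice[N NP] k : exists N, forall p q, (N <= p)%N -> (N <= q)%N ->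
  dDt (u p) (u q) < e k by exact: cu.
exists (fun k => \sum_(i < k.+1) N i)%N; split => [k|k p q].
  by rewrite [X in (_ <= X)%N]big_ord_recr leq_addr.
have Nk : (N k <= \sum_(i < k.+1) N i)%N by rewrite big_ord_recr leq_addl.
by move=> kp kq; apply: NP; apply: leq_trans Nk _.
Qed.

Lemma cls_chain (A : nat -> Dtilde R d) (e : nat -> R) :
  (forall k, dDt (A k) (A k.+1) < e k) ->
  exists Y : nat -> fn R d, forall k, cls (A k) (Y k) /\
    forall t, I01 t -> `|Y k t - Y k.+1 t| <= e k.
Proof.
move=> Ae.
have /choice[next nextP] (p : nat * fn R d) : exists y', cls (A p.1) p.2 ->
    cls (A p.1.+1) y' /\ forall t, I01 t -> `|p.2 t - y' t| <= e p.1.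
  case: p => k y /=; have [Ay|nAy] := pselect (cls (A k) y); last by exists y => /nAy.
  by have [y' ? ?] := dDt_lt_cls_r (Ae k) Ay; exists y'.
have [y0 Ay0] := cls_ex (A 0%N).
pose Y := fix Y k := if k is k'.+1 then next (k', Y k') else y0.
have AY k : cls (A k) (Y k) by elim: k => // k IH; exact: (nextP (k, Y k) IH).1.
by exists Y => k; split => //; have [] := nextP (k, Y k) (AY k).
Qed.

Lemma geometric_chain_limit (Y : nat -> fn R d) : (forall k, cadlag (Y k)) ->
  (forall k t, I01 t -> `|Y k t - Y k.+1 t| <= 2^-1 ^+ k.+1) ->
  exists2 y, cadlag y & forall k t, I01 t -> `|Y k t - y t| <= 2^-1 ^+ k.
Proof.
move=> cY YS.
have Y_cvg t : I01 t -> cvg (Y k t @[k --> \oo]) /\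
    forall k, `|Y k t - lim (Y n t @[n --> \oo])| <= 2^-1 ^+ k.
  move=> It; apply: cauchy_modulus_cvg geometric_cvg0 _.
  by apply: geometric_chain_dist => k; apply: YS.
pose y t := lim (Y k t @[k --> \oo]).
have Yy k t : I01 t -> `|Y k t - y t| <= 2^-1 ^+ k by move=> /Y_cvg[_].
exists y => //; apply: cadlag_uniform_closed => e e0.
have /cvgrPdist_lt/(_ e e0)[K _ wK] := @geometric_cvg0.
exists (Y K) => // t It; apply: le_lt_trans (Yy K t It) _.
by apply: le_lt_trans (wK K (leqnn K)); rewrite sub0r normrN ler_norm.
Qed.

Lemma Dtilde_complete : dDt_complete R d.
Proof.
move=> u cu; pose w k : R := 2^-1 ^+ k.
have w_gt0 k : 0 < w k by rewrite exprn_gt0 // invr_gt0.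
have [m [m_le m_mod]] := dDt_cauchy_modulus cu (fun k => w_gt0 k.+1).
have [Y YP] := cls_chain (fun k => m_mod k _ _ (leqnn _) (m_le k)).
have [y cy Yy] := geometric_chain_limit (fun k => cls_cadlag (YP k).1) (fun k => (YP k).2).
exists (Dclass cy).
have dDt_le_w K n : (m K <= n)%N -> dDt (u n) (Dclass cy) <= w K.+1 + w K.
  move=> Kn; have [z uz zY] := dDt_lt_cls_l (m_mod K _ _ Kn (leqnn _)) (YP K).1.
  apply: dDt_le uz (Dclass_cls cy) (@time_change_id R) _ => t It.
  by apply: le_trans (ler_distD (Y K t) _ _) _; apply: lerD; [exact: zY | exact: Yy].
apply/cvgrPdist_lt => e e0; have e20 : 0 < e / 2 by rewrite divr_gt0.
have /cvgrPdist_lt/(_ _ e20)[K _ wK] := @geometric_cvg0.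
exists (m K) => // n /= Kn; rewrite sub0r normrN ger0_norm ?dDt_ge0 //.
have wKe : w K < e / 2.
  by have := wK K (leqnn K); rewrite /= sub0r normrN ger0_norm // exprn_ge0 // invr_ge0.
have wS : w K.+1 = w K / 2 by rewrite /w exprSr.
by have := dDt_le_w K n Kn; lra.
Qed.

End Completeness.

Section PiecewiseLinear.
Variable R : realType.
Implicit Types (u v s : R) (tt : nat -> R).

Definition clamp01 u : R := Num.min (Num.max u 0) 1.

Lemma clamp01_le0 u : u <= 0 -> clamp01 u = 0.
Proof. by move=> u0; rewrite /clamp01 max_r // min_l // ler01. Qed.

Lemma clamp01_ge1 u : 1 <= u -> clamp01 u = 1.
Proof. by move=> u1; rewrite /clamp01 max_l ?min_r // (le_trans ler01). Qed.

Lemma clamp01_id u : 0 <= u <= 1 -> clamp01 u = u.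
Proof. by move=> /andP[u0 u1]; rewrite /clamp01 max_l // min_l. Qed.

Lemma clamp01_le u v : u <= v -> clamp01 u <= clamp01 v.
Proof. by move=> uv; apply: le_min2 => //; apply: le_max2. Qed.

Lemma clamp01_lt u v : 0 <= u -> u < 1 -> u < v -> clamp01 u < clamp01 v.
Proof.
move=> u0 u1 uv; rewrite (clamp01_id (u := u)) ?u0 ?ltW //.
have [v1|v1] := leP 1 v; first by rewrite clamp01_ge1.
by rewrite clamp01_id // (le_trans u0 (ltW uv)) ltW.
Qed.

Lemma clamp01_affine_continuous a b : continuous (fun s => clamp01 (s * a - b)).
Proof.
move=> s; apply: (@continuous_min _ _ (fun s => Num.max (s * a - b) 0) (fun=> 1)).
  apply: (@continuous_max _ _ (fun s => s * a - b) (fun=> 0)); last exact: cvg_cst.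
  by apply: cvgB; [apply: cvgM; [exact: cvg_id | exact: cvg_cst] | exact: cvg_cst].
exact: cvg_cst.
Qed.

Definition pwlin (k : nat) tt s :=
  \sum_(j < k) (tt j.+1 - tt j) * clamp01 (s * k%:R - j%:R).

Lemma pwlin_grid k tt i : (0 < k)%N -> (i <= k)%N ->
  pwlin k tt (i%:R / k%:R) = tt i - tt 0%N.
Proof.
move=> k0 ik; rewrite /pwlin divfK ?pnatr_eq0 -?lt0n //.
rewrite -(telescope_sumr _ (leq0n i)) big_mkord.
rewrite (big_ord_widen _ (fun j => tt j.+1 - tt j) ik) [RHS]big_mkcond /=.
apply: eq_bigr => j _; case: ltnP => ji.
  by rewrite clamp01_ge1 ?mulr1 // lerBrDr addrC natr1 ler_nat.
by rewrite clamp01_le0 ?mulr0 // subr_le0 ler_nat.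
Qed.

Lemma pwlin0 k tt : pwlin k tt 0 = 0.
Proof.
by rewrite /pwlin big1 // => j _; rewrite clamp01_le0 ?mulr0 // mul0r sub0r oppr_le0.
Qed.

Lemma pwlin1 k tt : (0 < k)%N -> pwlin k tt 1 = tt k - tt 0%N.
Proof. by move=> k0; rewrite -(pwlin_grid tt k0 (leqnn k)) divff // pnatr_eq0 -lt0n. Qed.

Lemma pwlin_continuous k tt : continuous (pwlin k tt).
Proof.
apply: (@continuous_big _ _ +%R 0 xpredT add_continuous) => j _ s.
by apply: cvgM; [exact: cvg_cst | exact: clamp01_affine_continuous].
Qed.

Section Increasing.
Variables (k : nat) (tt : nat -> R).
Hypothesis tt_lt : forall j, (j < k)%N -> tt j < tt j.+1.

Lemma pwlin_le s s' : s <= s' -> pwlin k tt s <= pwlin k tt s'.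
Proof.
move=> ss'; apply: ler_sum => j _; apply: ler_wpM2l; first by rewrite subr_ge0 ltW ?tt_lt.
by apply: clamp01_le; rewrite lerD2r ler_wpM2r.
Qed.

Lemma pwlin_lt s s' : (0 < k)%N -> 0 <= s -> s < 1 -> s < s' ->
  pwlin k tt s < pwlin k tt s'.
Proof.
move=> k0 s0 s1 ss'; have k0' : 0 < k%:R :> R by rewrite ltr0n.
have sk0 : 0 <= s * k%:R by rewrite mulr_ge0 // ltW.
set j0 := Num.truncn (s * k%:R).
have j0k : (j0 < k)%N by rewrite truncn_lt_nat // -[X in _ < X]mul1r ltr_pM2r.
rewrite /pwlin (bigD1 (Ordinal j0k)) //= [ltRHS](bigD1 (Ordinal j0k)) //=.
apply: ltr_leD.
  rewrite ltr_pM2l ?subr_gt0 ?tt_lt //; apply: clamp01_lt.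
  - by rewrite subr_ge0 truncn_le.
  - by rewrite ltrBlDl natr1 truncnS_gt.
  - by rewrite ltrD2r ltr_pM2r.
apply: ler_sum => j _; apply: ler_wpM2l; first by rewrite subr_ge0 ltW ?tt_lt.
by apply: clamp01_le; rewrite lerD2r ler_wpM2r // ltW.
Qed.

Lemma pwlin_time_change : (0 < k)%N -> tt 0%N = 0 -> tt k = 1 ->
  time_change (pwlin k tt).
Proof.
move=> k0 t0 tk.
have p0 : pwlin k tt 0 = 0 by rewrite pwlin0.
have p1 : pwlin k tt 1 = 1 by rewrite pwlin1 // t0 tk subr0.
split; last split.
- by apply: continuous_subspaceT; exact: pwlin_continuous.
- move=> s t /I01E/andP[s0 _] /I01E/andP[_ t1] st; apply: pwlin_lt => //.
  exact: lt_le_trans st t1.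
- apply/seteqP; split => [_ [s /I01E/andP[s0 s1] <-]|v /I01E/andP[v0 v1]].
    by apply/I01E; rewrite -{1}p0 -p1 !pwlin_le.
  have := @IVT R (pwlin k tt) 0 1 v ler01 (continuous_subspaceT (@pwlin_continuous k tt)).
  by rewrite p0 p1 (min_l ler01) (max_r ler01) v0 v1 => /(_ isT)[c cI <-]; exists c.
Qed.

Lemma pwlin_cell i s : (0 < k)%N -> tt 0%N = 0 -> (i < k)%N ->
  i%:R / k%:R <= s -> s < i.+1%:R / k%:R -> tt i <= pwlin k tt s < tt i.+1.
Proof.
move=> k0 t0 ik lo hi; have k0' : 0 < k%:R :> R by rewrite ltr0n.
rewrite -[tt i]subr0 -[tt i.+1]subr0 -t0.
rewrite -(pwlin_grid tt k0 (ltnW ik)) -(pwlin_grid tt k0 ik) pwlin_le //=.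
apply: pwlin_lt => //; first by apply: le_trans lo; rewrite divr_ge0 // ltW.
by apply: lt_le_trans hi _; rewrite ler_pdivrMr // mul1r ler_nat.
Qed.

End Increasing.

End PiecewiseLinear.

Section Separability.
Variables (R : realType) (d : nat).

(* For t in [0, 1), t lies in the cell [i / k.+1, i.+1 / k.+1) with
   i = cell_idx k t <= k; the end point 1 gets the index k.+1 of its own. *)
Definition cell_idx (k : nat) (t : R) : nat :=
  if t < 1 then Num.truncn (t * k.+1%:R) else k.+1.

Definition step_fn (k : nat) (a : nat -> 'rV[R]_d) : fn R d := fun t => a (cell_idx k t).

Lemma cell_idxE k i t : (i < k.+1)%N ->
  i%:R / k.+1%:R <= t -> t < i.+1%:R / k.+1%:R -> cell_idx k t = i.
Proof.
move=> ik lo hi; have k0 : 0 < k.+1%:R :> R by rewrite ltr0n.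
have t1 : t < 1 by apply: lt_le_trans hi _; rewrite ler_pdivrMr // mul1r ler_nat.
rewrite /cell_idx t1; apply: truncn_def.
by rewrite -ler_pdivrMr // lo -ltr_pdivlMr.
Qed.

Lemma cell_idx_le k t : I01 t -> (cell_idx k t <= k.+1)%N.
Proof.
move=> /I01E/andP[t0 _]; rewrite /cell_idx; case: ifP => // t1.
rewrite ltnW // truncn_lt_nat ?mulr_ge0 //.
by rewrite -[X in _ < X]mul1r ltr_pM2r ?ltr0n.
Qed.

Lemma step_fn_cadlag k a : cadlag (step_fn k a).
Proof.
have k0 : 0 < k.+1%:R :> R by rewrite ltr0n.
pose g i : R := i%:R / k.+1%:R.
have g0 : g 0%N = 0 by rewrite /g mul0r.
have gk : g k.+1 = 1 by rewrite /g divff // gt_eqF.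
split => t t0 t1.
- have [i ik /andP[lo hi]] : exists2 i, (i < k.+1)%N & g i <= t < g i.+1.
    by apply: partition_cell; rewrite ?g0 ?gk.
  apply: cvg_near_cst; near=> s.
  have [lo_s hi_s] : g i <= s /\ s < g i.+1.
    split; last by near: s; exact: nbhs_right_lt.
    by apply: le_trans lo _; near: s; exact: nbhs_right_ge.
  by rewrite /step_fn (cell_idxE ik lo hi) (cell_idxE ik lo_s hi_s).
- have [i ik /andP[lo hi]] : exists2 i, (i < k.+1)%N & g i < t <= g i.+1.
    by apply: partition_cell_rc; rewrite ?g0 ?gk.
  apply/cvg_ex; exists (a i); apply: cvg_near_cst; near=> s.
  have [lo_s hi_s] : g i <= s /\ s < g i.+1.
    split; first by apply: ltW; near: s; exact: nbhs_left_gt.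
    by apply: lt_le_trans hi; near: s; exact: nbhs_left_lt.
  by rewrite /step_fn (cell_idxE ik lo_s hi_s).
Unshelve. all: by end_near. Qed.

Lemma cadlag_step_approx (x : fn R d) e : cadlag x -> 0 < e ->
  exists k (tt : nat -> R) l, time_change l /\
    forall t, I01 t -> `|x (l t) - step_fn k (x \o tt) t| <= e.
Proof.
move=> cx e0; have [[|k] [tt [t0 tk tt_lt tosc]]] := cadlag_osc_partition cx e0.
  by move: (@ltr01 R); rewrite -tk t0 ltxx.
have k0 : 0 < k.+1%:R :> R by rewrite ltr0n.
exists k, tt, (pwlin k.+1 tt); split; first exact: pwlin_time_change.
move=> t /I01E/andP[t0' t1]; rewrite /step_fn.
move: t1; rewrite le_eqVlt => /predU1P[->|t1].
  by rewrite pwlin1 // t0 subr0 /cell_idx ltxx subrr normr0 ltW.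
have [i ik /andP[lo hi]] : exists2 i, (i < k.+1)%N & i%:R / k.+1%:R <= t < i.+1%:R / k.+1%:R.
  by apply: (@partition_cell R (fun i : nat => i%:R / k.+1%:R)); rewrite ?mul0r ?divff ?gt_eqF.
have /andP[plo phi] := pwlin_cell tt_lt (ltn0Sn k) t0 ik lo hi.
by rewrite (cell_idxE ik lo hi); apply: tosc.
Qed.

Definition grid_pt (M : nat) (z : 'rV[int]_d) : 'rV[R]_d :=
  map_mx (fun a : int => a%:~R / M.+1%:R) z.

Definition grid_round (M : nat) (w : 'rV[R]_d) : 'rV[int]_d :=
  map_mx (fun a : R => Num.floor (a * M.+1%:R)) w.

Lemma grid_round_dist M w : `|w - grid_pt M (grid_round M w)| <= M.+1%:R^-1.
Proof.
rewrite [leLHS]mx_normrE; apply: bigmax_le => [|ij _]; first by rewrite invr_ge0.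
rewrite !mxE; set N : R := M.+1%:R; have N0 : 0 < N by rewrite ltr0n.
set a := w ij.1 ij.2.
have := Num.Theory.floor_le (a * N); have := Num.Theory.floorD1_gt (a * N).
rewrite intrD => hi lo.
have -> : a - (Num.floor (a * N))%:~R / N = (a * N - (Num.floor (a * N))%:~R) / N.
  by field; rewrite gt_eqF.
rewrite normrM ger0_norm ?subr_ge0 // ger0_norm ?invr_ge0 ?ltW //.
by rewrite -[ltRHS]mul1r ltr_pM2r ?invr_gt0 //; lra.
Qed.

Definition grid_step_class (c : nat * nat * seq 'rV[int]_d) : Dtilde R d :=
  Dclass (step_fn_cadlag c.1.1 (grid_pt c.1.2 \o nth 0 c.2)).

Lemma Dtilde_separable : dDt_separable R d.
Proof.
exists (grid_step_class @` setT); split.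
  by apply: sub_countable (card_image_le _ _) _; exact: countableP.
move=> A e e0; have e20 : 0 < e / 2 by rewrite divr_gt0.
have [x Ax] := cls_ex A.
have [k [tt [l [tl x_step]]]] := cadlag_step_approx (cls_cadlag Ax) e20.
pose M := Num.truncn (e / 2)^-1.
have M_lt : M.+1%:R^-1 < e / 2.
  by rewrite -[ltRHS]invrK ltf_pV2 ?posrE ?invr_gt0 ?ltr0n // truncnS_gt.
pose v := [seq grid_round M (x (tt i)) | i <- iota 0 k.+2].
exists (grid_step_class (k, M, v)); first by exists (k, M, v).
have x_grid t : I01 t ->
    `|x (l t) - step_fn k (grid_pt M \o nth 0 v) t| <= e / 2 + M.+1%:R^-1.
  move=> It; rewrite /step_fn /= (nth_map 0%N) ?size_iota ?nth_iota ?ltnS ?cell_idx_le //.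
  apply: le_trans (ler_distD (x (tt (cell_idx k t))) _ _) _.
  by apply: lerD; [exact: x_step | exact: grid_round_dist].
apply: le_lt_trans (dDt_le Ax (Dclass_cls _) tl x_grid) _.
by move: M_lt; set r := M.+1%:R^-1; lra.
Qed.

End Separability.

Theorem lemmaA2 (R : realType) (d : nat) :
  dDt_separable R d /\ dDt_complete R d.
Proof. by split; [exact: Dtilde_separable | exact: Dtilde_complete]. Qed.
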